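(* For closed terms, the axiom system $\mathbf{BTC}$ (defined in the context) is complete with respect to the standard model: for all closed $\mathbf{BTC}$ tuplix terms $s$ and $t$, if $[\![s]\!]=[\![t]\!]$ then $\mathbf{BTC}\vdash s=t$.
   Context: Data: a meadow is a commutative ring with unit with a total unary operation $(\cdot)^{-1}$ satisfying $(u^{-1})^{-1}=u$ and $u\cdot(u\cdot u^{-1})=u$; a non-trivial cancellation meadow additionally satisfies $0\neq 1$ and the cancellation law ($u\neq 0$ and $uv=uw$ imply $v=w$). Fix such a structure $\mathcal{D}$. Data terms are built from data variables, constants $0,1$, binary $+,\cdot$ and unary $-$, $(\cdot)^{-1}$; write $p/q$ for $p\cdot q^{-1}$ and $p-q$ for $p+(-q)$. Fix a nonempty set $A$ of attributes. $\mathbf{BTC}$ tuplix terms are built from tuplix variables, constants $\epsilon$ and $\delta$, entries $a(p)$ ($a\in A$, $p$ a data term), zero tests $\gamma(p)$, and the binary operators $\oplus$ (conjunctive composition) and $+$ (alternative composition). $\mathbf{BTC}$ is the two-sorted equational proof system with axioms (T1) $x\oplus y=y\oplus x$; (T2) $(x\oplus y)\oplus z=x\oplus(y\oplus z)$; (T3) $x\oplus\epsilon=x$; (T4) $x\oplus\delta=\delta$; (T5) $a(u)\oplus a(v)=a(u+v)$; (T6) $\gamma(u)=\gamma(u/u)$; (T7) $\gamma(0)=\epsilon$; (T8) $\gamma(1)=\delta$; (T9) $\gamma(u)\oplus\gamma(v)=\gamma(u/u+v/v)$; (T10) $\gamma(u-v)\oplus a(u)=\gamma(u-v)\oplus a(v)$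 (for all $a\in A$); (C1) $x+y=y+x$; (C2) $(x+y)+z=x+(y+z)$; (C3) $x+x=x$; (C4) $x+\delta=x$; (C5) $x\oplus(y+z)=(x\oplus y)+(x\oplus z)$; (C6) $\gamma(u)+\gamma(v)=\gamma(uv)$; together with the rule (DE): for all data terms $p,q$, if $\mathcal{D}\models p=q$ then $\gamma(p)=\gamma(q)$ is derivable. Standard model: let $F$ be the set of partial functions $A\rightharpoonup\mathcal{D}$; the domain is $2^F$. For $a\in A$, $d\in\mathcal{D}$, $f_{a,d}$ is defined only at $a$ with value $d$; $f_\epsilon$ is nowhere defined. For $f,g\in F$, $f\oplus g$ is defined at $a$ iff $f$ or $g$ is, with value $f(a)$ if only $f$ is defined there, $g(a)$ if only $g$ is, and $f(a)+g(a)$ if both are. A term is closed if it contains no tuplix and no data variables; closed data terms $p$ denote elements $[\![p]\!]\in\mathcal{D}$. Closed tuplix terms are interpreted by $[\![\delta]\!]=\emptyset$, $[\![\epsilon]\!]=\{f_\epsilon\}$, $[\![a(p)]\!]=\{f_{a,[\![p]\!]}\}$, $[\![\gamma(p)]\!]=\{f_\epsilon\}$ if $[\![p]\!]=0$ and $=\emptyset$ otherwise, $[\![s\oplus t]\!]=\{f\oplus g\mid f\in[\![s]\!],g\in[\![t]\!]\}$, $[\![s+t]\!]=[\![s]\!]\cup[\![t]\!]$. *)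

Set Implicit Arguments.

Record CancMeadow : Type := {
  mcar :> Type;
  mzero : mcar; mone : mcar;
  madd : mcar -> mcar -> mcar;
  mmul : mcar -> mcar -> mcar;
  mopp : mcar -> mcar;
  minv : mcar -> mcar;
  madd_assoc : forall x y z, madd (madd x y) z = madd x (madd y z);
  madd_comm : forall x y, madd x y = madd y x;
  madd_0 : forall x, madd x mzero = x;
  madd_opp : forall x, madd x (mopp x) = mzero;
  mmul_assoc : forall x y z, mmul (mmul x y) z = mmul x (mmul y z);
  mmul_comm : forall x y, mmul x y = mmul y x;
  mmul_1 : forall x, mmul x mone = x;
  mmul_distr : forall x y z, mmul x (madd y z) = madd (mmul x y) (mmul x z);
  minv_inv : forall u, minv (minv u) = u;
  mmul_inv_ax : forall u, mmul u (mmul u (minv u)) = u;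
  mnontriv : mzero <> mone;
  mcancel : forall u v w, u <> mzero -> mmul u v = mmul u w -> v = w
}.

Inductive dterm : Type :=
| DVar : nat -> dterm
| DZero : dterm
| DOne : dterm
| DAdd : dterm -> dterm -> dterm
| DMul : dterm -> dterm -> dterm
| DOpp : dterm -> dterm
| DInv : dterm -> dterm.

Definition DDiv (p q : dterm) : dterm := DMul p (DInv q).
Definition DSub (p q : dterm) : dterm := DAdd p (DOpp q).

Fixpoint deval (M : CancMeadow) (rho : nat -> M) (p : dterm) : M :=
  match p with
  | DVar n => rho n
  | DZero => mzero M
  | DOne => mone M
  | DAdd p q => madd M (@deval M rho p) (@deval M rho q)
  | DMul p q => mmul M (@deval M rho p) (@deval M rho q)
  | DOpp p => mopp M (@deval M rho p)
  | DInv p => minv M (@deval M rho p)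
  end.
Arguments deval {M} rho p.

Definition dvalid (M : CancMeadow) (p q : dterm) : Prop :=
  forall rho : nat -> M, deval rho p = deval rho q.

Fixpoint dclosed (p : dterm) : Prop :=
  match p with
  | DVar _ => False
  | DZero | DOne => True
  | DAdd p q | DMul p q => dclosed p /\ dclosed q
  | DOpp p | DInv p => dclosed p
  end.

Inductive tterm (A : Type) : Type :=
| TVar : nat -> tterm A
| TEps : tterm A
| TDelta : tterm A
| TEntry : A -> dterm -> tterm A
| TGamma : dterm -> tterm A
| TConj : tterm A -> tterm A -> tterm A
| TAlt : tterm A -> tterm A -> tterm A.

Arguments TVar {A}. Arguments TEps {A}. Arguments TDelta {A}.
Arguments TGamma {A}.

Fixpoint tclosed (A : Type) (t : tterm A) : Prop :=
  match t with
  | TVar _ => False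
  | TEps | TDelta => True
  | TEntry _ p => dclosed p
  | TGamma p => dclosed p
  | TConj s t | TAlt s t => tclosed s /\ tclosed t
  end.

(** Axioms are given as schemes: x,y,z range over all tuplix terms and
    u,v over all data terms (this is equivalent to equational logic with
    substitution instances). *)
Inductive btc (M : CancMeadow) (A : Type) : tterm A -> tterm A -> Prop :=
| btc_refl : forall x, btc M x x
| btc_sym : forall x y, btc M x y -> btc M y x
| btc_trans : forall x y z, btc M x y -> btc M y z -> btc M x z
| btc_conj_cong : forall x x' y y', btc M x x' -> btc M y y' ->
    btc M (TConj x y) (TConj x' y')
| btc_alt_cong : forall x x' y y', btc M x x' -> btc M y y' ->
    btc M (TAlt x y) (TAlt x' y')
| btc_T1 : forall x y, btc M (TConj x y) (TConj y x)
| btc_T2 : forall x y z, btc M (TConj (TConj x y) z) (TConj x (TConj y z))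
| btc_T3 : forall x, btc M (TConj x TEps) x
| btc_T4 : forall x, btc M (TConj x TDelta) TDelta
| btc_T5 : forall a u v,
    btc M (TConj (TEntry a u) (TEntry a v)) (TEntry a (DAdd u v))
| btc_T6 : forall u, btc M (TGamma u) (TGamma (DDiv u u))
| btc_T7 : btc M (TGamma DZero) TEps
| btc_T8 : btc M (TGamma DOne) TDelta
| btc_T9 : forall u v,
    btc M (TConj (TGamma u) (TGamma v)) (TGamma (DAdd (DDiv u u) (DDiv v v)))
| btc_T10 : forall u v a,
    btc M (TConj (TGamma (DSub u v)) (TEntry a u))
          (TConj (TGamma (DSub u v)) (TEntry a v))
| btc_C1 : forall x y, btc M (TAlt x y) (TAlt y x)
| btc_C2 : forall x y z, btc M (TAlt (TAlt x y) z) (TAlt x (TAlt y z))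
| btc_C3 : forall x, btc M (TAlt x x) x
| btc_C4 : forall x, btc M (TAlt x TDelta) x
| btc_C5 : forall x y z,
    btc M (TConj x (TAlt y z)) (TAlt (TConj x y) (TConj x z))
| btc_C6 : forall u v, btc M (TAlt (TGamma u) (TGamma v)) (TGamma (DMul u v))
| btc_DE : forall p q, dvalid M p q -> btc M (TGamma p) (TGamma q).

(** F = partial functions A -> D, represented as A -> option D;
    the domain 2^F is represented by predicates on F. All sets below are
    closed under pointwise equality of partial functions. *)
Definition pfun (M : CancMeadow) (A : Type) := A -> option M.

Definition oplus_val (M : CancMeadow) (o1 o2 : option M) : option M :=
  match o1, o2 with
  | None, None => None
  | Some x, None => Some x
  | None, Some y => Some y
  | Some x, Some y => Some (madd M x y)
  end.

(** Value of a closed data term (the valuation is irrelevant for closed terms). *)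
Definition dden (M : CancMeadow) (p : dterm) : M := deval (fun _ => mzero M) p.

Fixpoint tden (M : CancMeadow) (A : Type) (t : tterm A) : pfun M A -> Prop :=
  match t with
  | TVar _ => fun _ => False (* not used: only closed terms are interpreted *)
  | TDelta => fun _ => False
  | TEps => fun h => forall b, h b = None
  | TEntry a p => fun h =>
      h a = Some (dden M p) /\ forall b, b <> a -> h b = None
  | TGamma p => fun h => dden M p = mzero M /\ forall b, h b = None
  | TConj s t => fun h => exists f g, @tden M A s f /\ @tden M A t g /\
      forall b, h b = oplus_val M (f b) (g b)
  | TAlt s t => fun h => @tden M A s h \/ @tden M A t h
  end.
Arguments tden {M A} t h.

Definition sem_eq (M : CancMeadow) (A : Type) (s t : tterm A) : Prop :=
  forall h : pfun M A, tden s h <-> tden t h.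

(** Every closed tuplix term is provably equal to a finite alternative
    composition of monomials, i.e. conjunctive compositions of entries; a
    monomial denotes a single partial function, so two closed terms with the
    same denotation have normal forms whose monomials match up semantically.
    Semantically equal monomials are provably equal: gather the entries of
    one attribute with (T5) and identify their closed sums with (T10) and
    (DE), then recurse on the remaining attributes.  Finally (C3) lets each
    normal form absorb the other. *)

From Stdlib Require Import List Setoid Morphisms Wf_nat ClassicalEpsilon Lia.
Import ListNotations.

(* Equality of attributes and of meadow elements is decided classically. *)
Definition dec (P : Prop) : {P} + {~ P} := excluded_middle_informative P.

Lemma length_filter_negb_lt {X : Type} (f : X -> bool) x l :
  In x l -> f x = true -> length (filter (fun e => negb (f e)) l) < length l.
Proof.
  intros Hx Hfx. rewrite <- (filter_length f l).
  assert (Hin : In x (filter f l)) by now apply filter_In.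
  destruct (filter f l); [contradiction | simpl; lia].
Qed.

Section Completeness.
Variables (M : CancMeadow) (A : Type).
Local Notation B := (btc M (A:=A)).

#[local] Instance btc_Equivalence : Equivalence B.
Proof. split; red; [apply btc_refl | apply btc_sym | eapply btc_trans]. Qed.

#[local] Instance TConj_Proper : Proper (B ==> B ==> B) (@TConj A).
Proof. intros x x' Hx y y' Hy; apply btc_conj_cong; auto. Qed.

#[local] Instance TAlt_Proper : Proper (B ==> B ==> B) (@TAlt A).
Proof. intros x x' Hx y y' Hy; apply btc_alt_cong; auto. Qed.

Lemma btc_conj_eps_l x : B (TConj TEps x) x.
Proof. now rewrite btc_T1, btc_T3. Qed.

Lemma btc_conj_delta_l x : B (TConj TDelta x) TDelta.
Proof. now rewrite btc_T1, btc_T4. Qed.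

Lemma btc_alt_delta_l x : B (TAlt TDelta x) x.
Proof. now rewrite btc_C1, btc_C4. Qed.

Lemma btc_conj_alt_distr_r x y z :
  B (TConj (TAlt x y) z) (TAlt (TConj x z) (TConj y z)).
Proof. now rewrite btc_T1, btc_C5, (btc_T1 _ z x), (btc_T1 _ z y). Qed.

Definition monomial_t := list (A * dterm).

Fixpoint monomial (m : monomial_t) : tterm A :=
  match m with
  | [] => TEps
  | (a, p) :: m' => TConj (TEntry a p) (monomial m')
  end.

Fixpoint msum (L : list monomial_t) : tterm A :=
  match L with
  | [] => TDelta
  | m :: L' => TAlt (monomial m) (msum L')
  end.

Definition mprod (L1 L2 : list monomial_t) : list monomial_t :=
  flat_map (fun m1 => map (app m1) L2) L1.

Lemma monomial_app m1 m2 : B (monomial (m1 ++ m2)) (TConj (monomial m1) (monomial m2)).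
Proof.
  induction m1 as [|[a p] m1 IH]; simpl.
  - now rewrite btc_conj_eps_l.
  - now rewrite IH, btc_T2.
Qed.

Lemma msum_app L1 L2 : B (msum (L1 ++ L2)) (TAlt (msum L1) (msum L2)).
Proof.
  induction L1 as [|m L1 IH]; simpl.
  - now rewrite btc_alt_delta_l.
  - now rewrite IH, btc_C2.
Qed.

Lemma conj_monomial_msum m L :
  B (TConj (monomial m) (msum L)) (msum (map (app m) L)).
Proof.
  induction L as [|m2 L IH]; simpl.
  - apply btc_T4.
  - now rewrite btc_C5, IH, monomial_app.
Qed.

Lemma conj_msum_msum L1 L2 : B (TConj (msum L1) (msum L2)) (msum (mprod L1 L2)).
Proof.
  unfold mprod; induction L1 as [|m L1 IH]; simpl.
  - apply btc_conj_delta_l.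
  - now rewrite btc_conj_alt_distr_r, conj_monomial_msum, IH, msum_app.
Qed.

Lemma deval_closed (rho : nat -> M) p : dclosed p -> deval rho p = dden M p.
Proof. unfold dden; induction p; simpl; intuition congruence. Qed.

Lemma mmul_inv_r (x : M) : x <> mzero M -> mmul M x (minv M x) = mone M.
Proof.
  intro Hx. apply (mcancel M _ _ Hx). now rewrite mmul_inv_ax, mmul_1.
Qed.

Lemma btc_gamma_zero p : dclosed p -> dden M p = mzero M -> B (TGamma p) TEps.
Proof.
  intros Hp Hp0. rewrite <- btc_T7. apply btc_DE.
  intro rho; simpl. now rewrite deval_closed.
Qed.

Lemma btc_gamma_nonzero p : dclosed p -> dden M p <> mzero M -> B (TGamma p) TDelta.
Proof.
  intros Hp Hp0. rewrite btc_T6, <- btc_T8. apply btc_DE.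
  intro rho; simpl. rewrite deval_closed by exact Hp. now apply mmul_inv_r.
Qed.

(* Variables have no normal form; they never occur in closed terms. *)
Fixpoint normal_form (t : tterm A) : list monomial_t :=
  match t with
  | TVar _ | TDelta => []
  | TEps => [[]]
  | TEntry a p => [[(a, p)]]
  | TGamma p => if dec (dden M p = mzero M) then [[]] else []
  | TConj s t => mprod (normal_form s) (normal_form t)
  | TAlt s t => normal_form s ++ normal_form t
  end.

Lemma btc_normal_form t : tclosed t -> B t (msum (normal_form t)).
Proof.
  induction t as [| | | a p | p | s IHs t IHt | s IHs t IHt]; simpl; intros Hc.
  - contradiction.
  - now rewrite btc_C4.
  - reflexivity.
  - now rewrite btc_C4, btc_T3.
  - destruct (dec (dden M p = mzero M)) as [Hp|Hp]; simpl.
    + now rewrite btc_C4, btc_gamma_zero.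
    + now apply btc_gamma_nonzero.
  - destruct Hc. rewrite <- conj_msum_msum. apply btc_conj_cong; auto.
  - destruct Hc. rewrite msum_app. apply btc_alt_cong; auto.
Qed.

Lemma oplus_val_assoc x y z :
  oplus_val M (oplus_val M x y) z = oplus_val M x (oplus_val M y z).
Proof. destruct x, y, z; simpl; auto. now rewrite madd_assoc. Qed.

Lemma oplus_val_comm x y : oplus_val M x y = oplus_val M y x.
Proof. destruct x, y; simpl; auto. now rewrite madd_comm. Qed.

Lemma oplus_val_None_r x : oplus_val M x None = x.
Proof. now destruct x. Qed.

Definition entry_val (a : A) (p : dterm) (c : A) : option M :=
  if dec (a = c) then Some (dden M p) else None.

Fixpoint monomial_val (m : monomial_t) (c : A) : option M :=
  match m with
  | [] => None
  | (a, p) :: m' => oplus_val M (entry_val a p c) (monomial_val m' c)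
  end.

Lemma monomial_val_app m1 m2 c :
  monomial_val (m1 ++ m2) c = oplus_val M (monomial_val m1 c) (monomial_val m2 c).
Proof.
  induction m1 as [|[a p] m1 IH]; simpl.
  - now destruct (monomial_val m2 c).
  - now rewrite IH, oplus_val_assoc.
Qed.

Lemma tden_entry a p h :
  tden (TEntry a p) h <-> forall c, h c = entry_val a p c.
Proof.
  unfold entry_val; simpl; split.
  - intros [Ha Hb] c. destruct (dec (a = c)) as [<-|Hac]; auto.
  - intros Hh. rewrite !Hh. destruct (dec (a = a)) as [_|]; [|tauto].
    split; [reflexivity|]. intros b Hb. rewrite Hh. destruct (dec (a = b)); congruence.
Qed.

Lemma monomial_val_single a p c : monomial_val [(a, p)] c = entry_val a p c.
Proof. apply oplus_val_None_r. Qed.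

Lemma tden_normal_form t h :
  tden t h <-> exists m, In m (normal_form t) /\ forall c, h c = monomial_val m c.
Proof.
  revert h; induction t as [| | | a p | p | s IHs t IHt | s IHs t IHt]; intro h.
  - split; [contradiction|]. now intros (m & [] & _).
  - split; [intro H; exists []; simpl; auto|]. now intros (m & [<-|[]] & H).
  - split; [contradiction|]. now intros (m & [] & _).
  - rewrite tden_entry. split.
    + intros Hh. exists [(a, p)]. split; [now left|].
      intro c. now rewrite monomial_val_single.
    + intros (m & [<-|[]] & Hh) c. now rewrite Hh, monomial_val_single.
  - simpl. destruct (dec (dden M p = mzero M)) as [Hp|Hp].
    + split; [intros [_ H]; exists []; simpl; auto|]. now intros (m & [<-|[]] & H).
    + split; [tauto|]. now intros (m & [] & _).
  - simpl; unfold mprod. split.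
    + intros (f & g & Hf & Hg & Hh).
      apply IHs in Hf as (m1 & I1 & H1). apply IHt in Hg as (m2 & I2 & H2).
      exists (m1 ++ m2). split.
      * apply in_flat_map. exists m1. split; [exact I1|]. now apply in_map.
      * intro c. now rewrite monomial_val_app, Hh, H1, H2.
    + intros (m & Im & Hm). apply in_flat_map in Im as (m1 & I1 & Im).
      apply in_map_iff in Im as (m2 & <- & I2).
      exists (monomial_val m1), (monomial_val m2). repeat split.
      * apply IHs. now exists m1.
      * apply IHt. now exists m2.
      * intro c. now rewrite Hm, monomial_val_app.
  - simpl. rewrite IHs, IHt. split.
    + intros [(m & I & H)|(m & I & H)]; exists m; split; auto; apply in_or_app; auto.
    + intros (m & I & H). apply in_app_or in I as [I|I]; [left|right]; now exists m.
Qed.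

Definition at_attr (a : A) (e : A * dterm) : bool :=
  if dec (fst e = a) then true else false.

Lemma at_attr_true a e : at_attr a e = true <-> fst e = a.
Proof. unfold at_attr. destruct (dec (fst e = a)); intuition discriminate. Qed.

Lemma monomial_filter (f : A * dterm -> bool) m :
  B (monomial m)
    (TConj (monomial (filter f m)) (monomial (filter (fun e => negb (f e)) m))).
Proof.
  induction m as [|[a p] m IH]; simpl.
  - symmetry; apply btc_T3.
  - destruct (f (a, p)); simpl; rewrite IH.
    + symmetry; apply btc_T2.
    + rewrite <- !btc_T2. now rewrite (btc_T1 _ (TEntry a p)).
Qed.

Lemma monomial_val_filter (f : A * dterm -> bool) m c :
  monomial_val m c
  = oplus_val M (monomial_val (filter f m) c)
                (monomial_val (filter (fun e => negb (f e)) m) c).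
Proof.
  induction m as [|[a p] m IH]; simpl; [reflexivity|].
  destruct (f (a, p)); simpl; rewrite IH.
  - now rewrite oplus_val_assoc.
  - now rewrite <- !oplus_val_assoc, (oplus_val_comm (entry_val a p c)).
Qed.

Lemma monomial_val_notin m c :
  (forall e, In e m -> fst e <> c) -> monomial_val m c = None.
Proof.
  induction m as [|[b p] m IH]; intros Hm; simpl; [reflexivity|].
  rewrite IH by (intros e He; apply Hm; now right).
  unfold entry_val. destruct (dec (b = c)) as [Hbc|]; [|reflexivity].
  now destruct (Hm (b, p) (or_introl eq_refl)).
Qed.

Lemma monomial_val_at_attr_ne a m c :
  a <> c -> monomial_val (filter (at_attr a) m) c = None.
Proof.
  intro Hac. apply monomial_val_notin. intros e He.
  apply filter_In, proj2, at_attr_true in He. congruence.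
Qed.

Lemma monomial_val_off_attr_eq a m :
  monomial_val (filter (fun e => negb (at_attr a e)) m) a = None.
Proof.
  apply monomial_val_notin. intros e He.
  apply filter_In in He as [_ He]. rewrite <- at_attr_true.
  now destruct (at_attr a e).
Qed.

Lemma monomial_val_at_attr_eq a m :
  monomial_val (filter (at_attr a) m) a = monomial_val m a.
Proof.
  now rewrite (monomial_val_filter (at_attr a) m a), monomial_val_off_attr_eq,
    oplus_val_None_r.
Qed.

Lemma monomial_val_off_attr_ne a m c :
  a <> c -> monomial_val (filter (fun e => negb (at_attr a e)) m) c = monomial_val m c.
Proof.
  intro Hac.
  rewrite (monomial_val_filter (at_attr a) m c), monomial_val_at_attr_ne by exact Hac.
  now destruct (monomial_val (filter (fun e => negb (at_attr a e)) m) c).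
Qed.

Lemma filter_at_attr_fst a m e : In e (filter (at_attr a) m) -> fst e = a.
Proof. now intros He%filter_In%proj2%at_attr_true. Qed.

Fixpoint entry_sum (p : dterm) (m : monomial_t) : dterm :=
  match m with
  | [] => p
  | (_, q) :: m' => DAdd p (entry_sum q m')
  end.

Lemma monomial_single_attr a p m :
  (forall e, In e m -> fst e = a) ->
  B (monomial ((a, p) :: m)) (TEntry a (entry_sum p m)).
Proof.
  revert p; induction m as [|[b q] m IH]; intros p Hm; simpl.
  - apply btc_T3.
  - assert (b = a) as -> by exact (Hm (b, q) (or_introl eq_refl)).
    assert (IHq := IH q (fun e He => Hm e (or_intror He))); simpl in IHq.
    now rewrite IHq, btc_T5.
Qed.

Lemma monomial_val_single_attr a p m :
  (forall e, In e m -> fst e = a) ->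
  monomial_val ((a, p) :: m) a = Some (dden M (entry_sum p m)).
Proof.
  revert p; induction m as [|[b q] m IH]; intros p Hm.
  - simpl. unfold entry_val. now destruct (dec (a = a)).
  - assert (b = a) as -> by exact (Hm (b, q) (or_introl eq_refl)).
    change (oplus_val M (entry_val a p a) (monomial_val ((a, q) :: m) a)
            = Some (dden M (entry_sum p ((a, q) :: m)))).
    rewrite IH by (intros e He; apply Hm; now right).
    unfold entry_val. now destruct (dec (a = a)).
Qed.

Definition mclosed (m : monomial_t) : Prop := forall e, In e m -> dclosed (snd e).

Lemma mclosed_filter f m : mclosed m -> mclosed (filter f m).
Proof. intros Hm e He%filter_In. now apply Hm. Qed.

Lemma entry_sum_closed p m : dclosed p -> mclosed m -> dclosed (entry_sum p m).
Proof.
  revert p; induction m as [|[b q] m IH]; intros p Hp Hm; simpl; [exact Hp|].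
  split; [exact Hp|]. apply IH.
  - exact (Hm (b, q) (or_introl eq_refl)).
  - intros e He. apply Hm. now right.
Qed.

(* (T10) with u - v provably equal to 0 replaces u by v. *)
Lemma btc_entry_val a x y :
  dclosed x -> dclosed y -> dden M x = dden M y -> B (TEntry a x) (TEntry a y).
Proof.
  intros Hx Hy Hxy.
  assert (Hxy0 : B (TGamma (DSub x y)) TEps).
  { apply btc_gamma_zero; [now split|].
    unfold dden in *; simpl. rewrite Hxy. apply madd_opp. }
  rewrite <- (btc_conj_eps_l (TEntry a x)), <- (btc_conj_eps_l (TEntry a y)), <- Hxy0.
  apply btc_T10.
Qed.

Lemma monomial_val_cons_self a p m : monomial_val ((a, p) :: m) a <> None.
Proof.
  simpl. unfold entry_val. destruct (dec (a = a)); [|tauto].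
  now destruct (monomial_val m a).
Qed.

Lemma monomial_single_attr_complete a m1 m2 :
  (forall e, In e m1 -> fst e = a) -> (forall e, In e m2 -> fst e = a) ->
  mclosed m1 -> mclosed m2 -> monomial_val m1 a = monomial_val m2 a ->
  B (monomial m1) (monomial m2).
Proof.
  intros A1 A2 C1 C2 Hs.
  destruct m1 as [|[b p] m1], m2 as [|[b' q] m2]; [reflexivity| | |].
  - rewrite <- (A2 (b', q) (or_introl eq_refl)) in Hs.
    now destruct (monomial_val_cons_self b' q m2).
  - rewrite <- (A1 (b, p) (or_introl eq_refl)) in Hs.
    now destruct (monomial_val_cons_self b p m1).
  - assert (b = a) as -> by exact (A1 (b, p) (or_introl eq_refl)).
    assert (b' = a) as -> by exact (A2 (b', q) (or_introl eq_refl)).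
    assert (A1' : forall e, In e m1 -> fst e = a) by (intros e He; apply A1; now right).
    assert (A2' : forall e, In e m2 -> fst e = a) by (intros e He; apply A2; now right).
    rewrite (monomial_single_attr a p m1 A1'), (monomial_single_attr a q m2 A2').
    rewrite (monomial_val_single_attr a p m1 A1'), (monomial_val_single_attr a q m2 A2')
      in Hs.
    apply btc_entry_val; [| |congruence].
    + apply entry_sum_closed; [exact (C1 _ (or_introl eq_refl))|].
      intros e He; apply C1; now right.
    + apply entry_sum_closed; [exact (C2 _ (or_introl eq_refl))|].
      intros e He; apply C2; now right.
Qed.

(* Split off the entries of the first attribute of [m1] and recurse on the rest. *)
Lemma monomial_complete m1 m2 :
  mclosed m1 -> mclosed m2 ->
  (forall c, monomial_val m1 c = monomial_val m2 c) -> B (monomial m1) (monomial m2).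
Proof.
  revert m2; induction m1 as [m1 IH] using (induction_ltof1 _ (@length _)).
  intros m2 C1 C2 Hs.
  destruct m1 as [|[a p] m1'] eqn:E1.
  - destruct m2 as [|[b q] m2]; [reflexivity|].
    destruct (monomial_val_cons_self b q m2). now rewrite <- Hs.
  - rewrite <- E1 in *.
    rewrite (monomial_filter (at_attr a) m1), (monomial_filter (at_attr a) m2).
    assert (Hpa : at_attr a (a, p) = true) by now apply at_attr_true.
    apply btc_conj_cong.
    + apply monomial_single_attr_complete with a;
        try apply filter_at_attr_fst; try apply mclosed_filter; auto.
      now rewrite !monomial_val_at_attr_eq.
    + apply IH; try apply mclosed_filter; auto.
      * apply (length_filter_negb_lt _ (a, p)); [rewrite E1; now left | exact Hpa].
      * intro c. destruct (dec (a = c)) as [<-|Hac].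
        -- now rewrite !monomial_val_off_attr_eq.
        -- now rewrite !monomial_val_off_attr_ne.
Qed.

Lemma msum_absorb_monomial m L : In m L -> B (TAlt (monomial m) (msum L)) (msum L).
Proof.
  induction L as [|m0 L IH]; intros Hm; [destruct Hm|]; simpl.
  destruct Hm as [<-|Hm].
  - now rewrite <- btc_C2, btc_C3.
  - now rewrite <- btc_C2, (btc_C1 _ (monomial m)), btc_C2, IH.
Qed.

Definition msum_covered (L1 L2 : list monomial_t) : Prop :=
  forall m, In m L1 -> exists m', In m' L2 /\ B (monomial m) (monomial m').

Lemma msum_absorb L1 L2 :
  msum_covered L1 L2 -> B (TAlt (msum L1) (msum L2)) (msum L2).
Proof.
  induction L1 as [|m L1 IH]; intros HL; simpl.
  - apply btc_alt_delta_l.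
  - rewrite btc_C2, IH by (intros m1 Hm1; apply HL; now right).
    destruct (HL m (or_introl eq_refl)) as (m' & Hm' & Hmm').
    rewrite Hmm'. now apply msum_absorb_monomial.
Qed.

Lemma normal_form_mclosed t : tclosed t -> forall m, In m (normal_form t) -> mclosed m.
Proof.
  induction t as [| | | a p | p | s IHs t IHt | s IHs t IHt]; simpl; intros Hc m Hm;
    try contradiction.
  - destruct Hm as [<-|[]]. intros e [].
  - destruct Hm as [<-|[]]. now intros ? [<-|[]].
  - destruct (dec (dden M p = mzero M)) as [_|]; [|contradiction].
    destruct Hm as [<-|[]]. intros e [].
  - destruct Hc as [Cs Ct]. apply in_flat_map in Hm as (m1 & I1 & Hm).
    apply in_map_iff in Hm as (m2 & <- & I2).
    intros e [He|He]%in_app_or; [apply (IHs Cs m1) | apply (IHt Ct m2)]; auto.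
  - destruct Hc as [Cs Ct]. apply in_app_or in Hm as [Hm|Hm]; eauto.
Qed.

Lemma normal_form_covered s t :
  tclosed s -> tclosed t -> (forall h : pfun M A, tden s h -> tden t h) ->
  msum_covered (normal_form s) (normal_form t).
Proof.
  intros Cs Ct Hst m Hm.
  assert (Hs : tden s (monomial_val m)) by (apply tden_normal_form; now exists m).
  apply Hst, tden_normal_form in Hs as (m' & Hm' & Hval).
  exists m'. split; [exact Hm'|].
  apply monomial_complete; [| |exact Hval].
  - now apply (normal_form_mclosed s).
  - now apply (normal_form_mclosed t).
Qed.

Lemma msum_mutually_covered L1 L2 :
  msum_covered L1 L2 -> msum_covered L2 L1 -> B (msum L1) (msum L2).
Proof.
  intros H12 H21. rewrite <- (msum_absorb L2 L1 H21) at 1.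
  now rewrite btc_C1, msum_absorb.
Qed.

End Completeness.

Theorem theorem2 (M : CancMeadow) (A : Type) (HA : inhabited A)
  (s t : tterm A) :
  tclosed s -> tclosed t -> sem_eq M s t -> btc M s t.
Proof.
  intros Cs Ct Hst.
  eapply btc_trans; [now apply btc_normal_form|].
  eapply btc_trans; [|apply btc_sym; now apply btc_normal_form].
  apply msum_mutually_covered; apply normal_form_covered; auto; intro h; apply Hst.
Qed.
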